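(* For every topological space $X$, the singular cubical set $\mathrm{Sing}(X)$, regarded as a type over a terminal cubical set, admits a composition structure.
   Context: Fix a countably infinite set of names. $\mathsf{dM}(J)$ is the free de Morgan algebra on $J$. The cube category $\mathcal{C}$ has finite sets of names as objects; a morphism $f:J\to I$ is a map $I\to\mathsf{dM}(J)$, composed by substitution (Kleisli composition). Write $I,i$ for $I\cup\{i\}$ with $i\notin I$. For $b\in\{0,1\}$, $(ib):I\to I,i$ sends $i\mapsto b$ and $k\mapsto k$ for $k\in I$. For $f:J\to I$ and $j\notin J$, $(f,i{=}j):J,j\to I,i$ sends $i\mapsto j$ and $k\mapsto f(k)$. A cubical set is a functor $\mathcal{C}^{op}\to\mathbf{Set}$; write $xf$ for the restriction of $x$ along $f$. Each $f:J\to I$ induces a continuous map $[0,1]^J\to[0,1]^I$, $(fu)_k=f(k)$ evaluated at $u$ using $\min,\max,1-x$. $\mathrm{Sing}(X)(I)$ is the set of continuous maps $[0,1]^I\to X$, with restriction along $f$ given by precomposition with the induced map. The face lattice $\mathbb{F}$ is the distributive lattice generated by $(k=0),(k=1)$ for names $k$ with $(k=0)\wedge(k=1)=0_\mathbb{F}$; $\mathbb{F}(I)$ uses names in $I$; for $\varphi\in\mathbb{F}(I)$ and $f:J\to I$, $\varphi f\in\mathbb{F}(J)$ substitutes $(k=1)\mapsto(f(k)=1)$, $(k=0)\mapsto(1-f(k)=1)$, where $r\mapsto(r=1)$ is the lattice map $\mathsf{dM}(J)\to\mathbb{F}(J)$ with $j\mapsto(j=1)$, $1-j\mapsto(j=0)$,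 $0\mapsto0_\mathbb{F}$, $1\mapsto1_\mathbb{F}$. A composition structure on a cubical set $Y$ (as a type over the terminal cubical set) assigns to every $I$, $i\notin I$, $\varphi\in\mathbb{F}(I)$, family $u=(u_f)$ indexed by morphisms $f:J\to I,i$ with $\varphi f=1_\mathbb{F}$ (where $\varphi$ is viewed in $\mathbb{F}(I,i)$), $u_f\in Y(J)$, with $u_f g=u_{fg}$, and $a_0\in Y(I)$ with $a_0 f=u_{(i0)f}$ for all $f:J\to I$ with $\varphi f=1_\mathbb{F}$, an element $\mathrm{comp}(I,i,\varphi,u,a_0)\in Y(I)$ such that (i) for all $f:J\to I$ and $j\notin J$, $\mathrm{comp}(I,i,\varphi,u,a_0)f=\mathrm{comp}(J,j,\varphi f,u',a_0f)$ where $u'_g=u_{(f,i=j)g}$; and (ii) if $\varphi=1_\mathbb{F}$ then $\mathrm{comp}(I,i,\varphi,u,a_0)=u_{(i1)}$. *)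

From Stdlib Require Import Reals Lra Lia Bool Arith.
Open Scope R_scope.

(* An object is a finite set of names, represented by its (finitely supported)
   characteristic function; with functional extensionality equal sets are
   equal objects. *)
Definition cobj : Type :=
  { p : nat -> bool | exists N : nat, forall n : nat, (N <= n)%nat -> p n = false }.

Definition mem (I : cobj) (n : nat) : bool := proj1_sig I n.

Lemma add_fin (I : cobj) (i : nat) :
  exists N : nat, forall n : nat, (N <= n)%nat -> (mem I n || Nat.eqb n i) = false.
Proof.
  destruct (proj2_sig I) as [N H]. exists (Nat.max N (S i)). intros n Hn.
  unfold mem. rewrite H by lia. simpl. apply Nat.eqb_neq. lia.
Qed.

Definition add (I : cobj) (i : nat) : cobj :=
  exist _ (fun n => mem I n || Nat.eqb n i) (add_fin I i).

(** * Free de Morgan algebra dM(J) *)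
Inductive dM : Type :=
| dvar (n : nat) | dzero | done
| dmeet (a b : dM) | djoin (a b : dM) | dneg (a : dM).

Inductive dM_eq : dM -> dM -> Prop :=
| dMe_refl a : dM_eq a a
| dMe_sym a b : dM_eq a b -> dM_eq b a
| dMe_trans a b c : dM_eq a b -> dM_eq b c -> dM_eq a c
| dMe_meet a a' b b' : dM_eq a a' -> dM_eq b b' -> dM_eq (dmeet a b) (dmeet a' b')
| dMe_join a a' b b' : dM_eq a a' -> dM_eq b b' -> dM_eq (djoin a b) (djoin a' b')
| dMe_neg a a' : dM_eq a a' -> dM_eq (dneg a) (dneg a')
| dMe_meetA a b c : dM_eq (dmeet a (dmeet b c)) (dmeet (dmeet a b) c)
| dMe_joinA a b c : dM_eq (djoin a (djoin b c)) (djoin (djoin a b) c)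
| dMe_meetC a b : dM_eq (dmeet a b) (dmeet b a)
| dMe_joinC a b : dM_eq (djoin a b) (djoin b a)
| dMe_absM a b : dM_eq (dmeet a (djoin a b)) a
| dMe_absJ a b : dM_eq (djoin a (dmeet a b)) a
| dMe_distr a b c : dM_eq (dmeet a (djoin b c)) (djoin (dmeet a b) (dmeet a c))
| dMe_meet1 a : dM_eq (dmeet a done) a
| dMe_join0 a : dM_eq (djoin a dzero) a
| dMe_negK a : dM_eq (dneg (dneg a)) a
| dMe_negM a b : dM_eq (dneg (dmeet a b)) (djoin (dneg a) (dneg b))
| dMe_neg0 : dM_eq (dneg dzero) done.

Fixpoint dM_in (J : cobj) (t : dM) : Prop :=
  match t with
  | dvar n => mem J n = true
  | dzero | done => True
  | dmeet a b | djoin a b => dM_in J a /\ dM_in J b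
  | dneg a => dM_in J a
  end.

Fixpoint subst (s : nat -> dM) (t : dM) : dM :=
  match t with
  | dvar n => s n
  | dzero => dzero
  | done => done
  | dmeet a b => dmeet (subst s a) (subst s b)
  | djoin a b => djoin (subst s a) (subst s b)
  | dneg a => dneg (subst s a)
  end.

Lemma subst_in (J K : cobj) (s : nat -> dM) (t : dM) :
  dM_in J t -> (forall n, mem J n = true -> dM_in K (s n)) -> dM_in K (subst s t).
Proof. induction t; simpl; intuition. Qed.

Lemma dM_in_mono (J K : cobj) (t : dM) :
  (forall n, mem J n = true -> mem K n = true) -> dM_in J t -> dM_in K t.
Proof. induction t; simpl; intuition. Qed.

(* A morphism f : J -> I is a map I -> dM(J); it is represented by a function
   on all names whose values on I are terms over J (values outside I are
   irrelevant). Morphisms are identified up to [heq]. *)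
Record hom (J I : cobj) : Type := mkHom {
  hmap :> nat -> dM ;
  hwf : forall k, mem I k = true -> dM_in J (hmap k) }.
Arguments mkHom {J I}.
Arguments hmap {J I}.
Arguments hwf {J I}.

Definition heq {J I : cobj} (f g : hom J I) : Prop :=
  forall k, mem I k = true -> dM_eq (f k) (g k).

Definition hom_id (I : cobj) : hom I I :=
  mkHom (fun n => dvar n) (fun k h => h).

Definition hom_comp {I J K : cobj} (f : hom J I) (g : hom K J) : hom K I :=
  mkHom (fun k => subst (hmap g) (f k))
        (fun k h => subst_in J K (hmap g) (f k) (hwf f k h) (hwf g)).

Lemma face_i_wf (I : cobj) (i : nat) (b : bool) :
  forall k, mem (add I i) k = true ->
  dM_in I (if Nat.eqb k i then (if b then done else dzero) else dvar k).
Proof.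
  intros k Hk. unfold add, mem in Hk; simpl in Hk. revert Hk.
  destruct (Nat.eqb k i); simpl.
  - intros _. destruct b; exact Logic.I.
  - rewrite orb_false_r. auto.
Qed.

Definition face_i (I : cobj) (i : nat) (b : bool) : hom I (add I i) :=
  mkHom (fun k => if Nat.eqb k i then (if b then done else dzero) else dvar k)
        (face_i_wf I i b).

Lemma hom_ext_wf {J I : cobj} (f : hom J I) (i j : nat) :
  forall k, mem (add I i) k = true ->
  dM_in (add J j) (if Nat.eqb k i then dvar j else f k).
Proof.
  intros k Hk. unfold add, mem in Hk; simpl in Hk. revert Hk.
  destruct (Nat.eqb k i); simpl.
  - intros _. unfold mem; simpl. rewrite Nat.eqb_refl, orb_true_r. reflexivity.
  - rewrite orb_false_r. intros Hk. apply (dM_in_mono J).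
    + intros n Hn. unfold mem; simpl. fold (mem J n). rewrite Hn. reflexivity.
    + exact (hwf f k Hk).
Qed.

Definition hom_ext {J I : cobj} (f : hom J I) (i j : nat) : hom (add J j) (add I i) :=
  mkHom (fun k => if Nat.eqb k i then dvar j else f k) (hom_ext_wf f i j).

Record Top : Type := {
  tpt :> Type ;
  topen : (tpt -> Prop) -> Prop ;
  topen_full : topen (fun _ => True) ;
  topen_inter : forall U V, topen U -> topen V -> topen (fun x => U x /\ V x) ;
  topen_union : forall A : (tpt -> Prop) -> Prop,
      (forall U, A U -> topen U) -> topen (fun x => exists U, A U /\ U x) }.

Definition cube (I : cobj) : Type :=
  { u : {k : nat | mem I k = true} -> R | forall k, 0 <= u k <= 1 }.

(* open subsets of [0,1]^I (product = sup-metric topology, subspace of R^I) *)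
Definition cube_open (I : cobj) (U : cube I -> Prop) : Prop :=
  forall u, U u -> exists eps, 0 < eps /\
    forall v : cube I, (forall k, Rabs (proj1_sig v k - proj1_sig u k) < eps) -> U v.

Definition cont (X : Top) (I : cobj) (g : cube I -> X) : Prop :=
  forall V, topen X V -> cube_open I (fun u => V (g u)).

Fixpoint ev (rho : nat -> R) (t : dM) : R :=
  match t with
  | dvar n => rho n
  | dzero => 0
  | done => 1
  | dmeet a b => Rmin (ev rho a) (ev rho b)
  | djoin a b => Rmax (ev rho a) (ev rho b)
  | dneg a => 1 - ev rho a
  end.

Definition sb (b : bool) : {b = true} + {b = false} :=
  match b as b0 return {b0 = true} + {b0 = false} with
  | true => left eq_refl | false => right eq_refl end.

Definition extv {I : cobj} (u : cube I) (n : nat) : R :=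
  match sb (mem I n) with
  | left h => proj1_sig u (exist _ n h)
  | right _ => 0
  end.

Lemma extv_bound {I : cobj} (u : cube I) : forall n, 0 <= extv u n <= 1.
Proof. intros n. unfold extv. destruct (sb (mem I n)). apply (proj2_sig u). lra. Qed.

Lemma ev_bound (rho : nat -> R) (t : dM) :
  (forall n, 0 <= rho n <= 1) -> 0 <= ev rho t <= 1.
Proof.
  intros H; induction t; simpl; auto; try lra;
  try (unfold Rmin; destruct Rle_dec; lra);
  try (unfold Rmax; destruct Rle_dec; lra).
Qed.

Definition cube_map {J I : cobj} (f : hom J I) (u : cube J) : cube I :=
  exist (fun w : {k : nat | mem I k = true} -> R => forall k, 0 <= w k <= 1)
        (fun k => ev (extv u) (f (proj1_sig k)))
        (fun k => ev_bound (extv u) (f (proj1_sig k)) (extv_bound u)).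

Lemma ev_lip (rho sigma : nat -> R) (eps : R) (t : dM) :
  0 < eps -> (forall n, Rabs (rho n - sigma n) < eps) ->
  Rabs (ev rho t - ev sigma t) < eps.
Proof.
  intros He H; induction t; simpl; auto;
  try (apply Rabs_def1; lra);
  repeat match goal with
         | Hx : Rabs _ < _ |- _ => apply Rabs_def2 in Hx; destruct Hx
         end;
  apply Rabs_def1;
  try (unfold Rmin; repeat destruct Rle_dec; lra);
  try (unfold Rmax; repeat destruct Rle_dec; lra); lra.
Qed.

Lemma cube_map_lip {J I : cobj} (f : hom J I) (u v : cube J) (eps : R) :
  0 < eps -> (forall k, Rabs (proj1_sig v k - proj1_sig u k) < eps) ->
  forall k, Rabs (proj1_sig (cube_map f v) k - proj1_sig (cube_map f u) k) < eps.
Proof.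
  intros He H k. simpl. apply ev_lip; auto. intros n. unfold extv.
  destruct (sb (mem J n)). apply H. apply Rabs_def1; lra.
Qed.

Lemma cont_comp (X : Top) {J I : cobj} (f : hom J I) (g : cube I -> X) :
  cont X I g -> cont X J (fun u => g (cube_map f u)).
Proof.
  intros Hg V HV u Hu. destruct (Hg V HV (cube_map f u) Hu) as [eps [He Hv]].
  exists eps; split; auto. intros v Hvu. apply Hv. apply cube_map_lip; auto.
Qed.

Record cdata : Type := {
  ob : cobj -> Type ;
  res : forall (I J : cobj), hom J I -> ob I -> ob J }.
Arguments res c {I J} _ _.

Definition sing_ob (X : Top) (I : cobj) : Type := { g : cube I -> X | cont X I g }.

Definition sing_res (X : Top) (I J : cobj) (f : hom J I) (x : sing_ob X I) : sing_ob X J :=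
  exist _ (fun u => proj1_sig x (cube_map f u)) (cont_comp X f (proj1_sig x) (proj2_sig x)).

Definition Sing (X : Top) : cdata := {| ob := sing_ob X ; res := sing_res X |}.

(** * The face lattice F *)
Inductive face : Type :=
| fbot | ftop | feq0 (k : nat) | feq1 (k : nat)
| fmeet (a b : face) | fjoin (a b : face).

Inductive face_eq : face -> face -> Prop :=
| fe_refl a : face_eq a a
| fe_sym a b : face_eq a b -> face_eq b a
| fe_trans a b c : face_eq a b -> face_eq b c -> face_eq a c
| fe_meet a a' b b' : face_eq a a' -> face_eq b b' -> face_eq (fmeet a b) (fmeet a' b')
| fe_join a a' b b' : face_eq a a' -> face_eq b b' -> face_eq (fjoin a b) (fjoin a' b')
| fe_meetA a b c : face_eq (fmeet a (fmeet b c)) (fmeet (fmeet a b) c)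
| fe_joinA a b c : face_eq (fjoin a (fjoin b c)) (fjoin (fjoin a b) c)
| fe_meetC a b : face_eq (fmeet a b) (fmeet b a)
| fe_joinC a b : face_eq (fjoin a b) (fjoin b a)
| fe_absM a b : face_eq (fmeet a (fjoin a b)) a
| fe_absJ a b : face_eq (fjoin a (fmeet a b)) a
| fe_distr a b c : face_eq (fmeet a (fjoin b c)) (fjoin (fmeet a b) (fmeet a c))
| fe_meet1 a : face_eq (fmeet a ftop) a
| fe_join0 a : face_eq (fjoin a fbot) a
| fe_01 k : face_eq (fmeet (feq0 k) (feq1 k)) fbot.

Fixpoint face_in (I : cobj) (p : face) : Prop :=
  match p with
  | fbot | ftop => True
  | feq0 k | feq1 k => mem I k = true
  | fmeet a b | fjoin a b => face_in I a /\ face_in I b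
  end.

(* tf true r = (r = 1),  tf false r = (1 - r = 1): the lattice map dM(J) -> F(J) *)
Fixpoint tf (b : bool) (t : dM) : face :=
  match t with
  | dvar j => if b then feq1 j else feq0 j
  | dzero => if b then fbot else ftop
  | done => if b then ftop else fbot
  | dmeet x y => if b then fmeet (tf b x) (tf b y) else fjoin (tf b x) (tf b y)
  | djoin x y => if b then fjoin (tf b x) (tf b y) else fmeet (tf b x) (tf b y)
  | dneg x => tf (negb b) x
  end.

Fixpoint face_subst (s : nat -> dM) (p : face) : face :=
  match p with
  | fbot => fbot
  | ftop => ftop
  | feq0 k => tf false (s k)
  | feq1 k => tf true (s k)
  | fmeet a b => fmeet (face_subst s a) (face_subst s b)
  | fjoin a b => fjoin (face_subst s a) (face_subst s b)
  end.

Definition family (Y : cdata) (I : cobj) (i : nat) (phi : face) : Type :=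
  forall (J : cobj) (f : hom J (add I i)), face_eq (face_subst f phi) ftop -> ob Y J.

Definition family_ok (Y : cdata) (I : cobj) (i : nat) (phi : face)
    (u : family Y I i phi) : Prop :=
  (* u is indexed by morphisms, i.e. by equivalence classes of representatives *)
  (forall J (f g : hom J (add I i)) h h', heq f g -> u J f h = u J g h') /\
  (forall J K (f : hom J (add I i)) (g : hom K J) h h',
      res Y g (u J f h) = u K (hom_comp f g) h').

Definition base_ok (Y : cdata) (I : cobj) (i : nat) (phi : face)
    (u : family Y I i phi) (a0 : ob Y I) : Prop :=
  forall J (f : hom J I) (h : face_eq (face_subst f phi) ftop)
    (h' : face_eq (face_subst (hom_comp (face_i I i false) f) phi) ftop),
    res Y f a0 = u J (hom_comp (face_i I i false) f) h'.

Definition valid (Y : cdata) (I : cobj) (i : nat) (phi : face)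
    (u : family Y I i phi) (a0 : ob Y I) : Prop :=
  mem I i = false /\ face_in I phi /\ family_ok Y I i phi u /\ base_ok Y I i phi u a0.

Record comp_structure (Y : cdata) : Type := {
  comp : forall (I : cobj) (i : nat) (phi : face), family Y I i phi -> ob Y I -> ob Y I ;
  (* comp is well defined on F(I) (phi is an element of the lattice) *)
  comp_proper : forall I i phi psi (u : family Y I i phi) (v : family Y I i psi) a0,
      valid Y I i phi u a0 -> valid Y I i psi v a0 -> face_eq phi psi ->
      (forall J f h h', u J f h = v J f h') ->
      comp I i phi u a0 = comp I i psi v a0 ;
  comp_nat : forall I i phi (u : family Y I i phi) a0 J j (f : hom J I)
      (u' : family Y J j (face_subst f phi)),
      valid Y I i phi u a0 ->
      valid Y J j (face_subst f phi) u' (res Y f a0) ->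
      (forall K (g : hom K (add J j)) h h', u' K g h = u K (hom_comp (hom_ext f i j) g) h') ->
      res Y f (comp I i phi u a0) = comp J j (face_subst f phi) u' (res Y f a0) ;
  comp_full : forall I i phi (u : family Y I i phi) a0
      (h : face_eq (face_subst (face_i I i true) phi) ftop),
      valid Y I i phi u a0 -> face_eq phi ftop ->
      comp I i phi u a0 = u I (face_i I i true) h }.

(* The composite is the value of a discontinuous "filling" of the open box, pulled back along a
   continuous map [lift] from [0,1]^I into the box.  The filling [glue] takes the value of the tube
   [u] wherever [phi] holds and the value of the base [a0] (forgetting the coordinate [i])
   elsewhere.  The map [lift] sends [x] to [(sharpen d x, h)], where [sharpen d] pushes coordinates
   within roughly [d] of an endpoint onto that endpoint and [d], [h] depend continuously on how
   nearly [x] satisfies [phi]: when [phi] is nearly satisfied the sharpened point satisfies [phi],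
   and otherwise [h = 0], so [lift] lands in the box, on which [glue] is continuous because the
   pieces of [u] and [a0] agree on overlaps.  Since [sharpen d] commutes with min, max and
   [1 - x], [lift] is natural in [I], which gives uniformity; for [phi = 1] we get [d = 0] and
   [h = 1], hence the lid [u_(i1)]. *)

From Pilot Require Import Defs.
From Stdlib Require Import Reals Lra Lia Bool Arith List Setoid Morphisms.
From Stdlib Require Import ClassicalEpsilon ProofIrrelevance FunctionalExtensionality.
Open Scope R_scope.

Ltac solve_minmax := unfold Rmin, Rmax in *; repeat destruct Rle_dec; lra.

Lemma Rabs_le_inv x a : Rabs x <= a -> - a <= x <= a.
Proof. unfold Rabs; destruct Rcase_abs; lra. Qed.

Lemma Rabs_lt_iff x a : Rabs x < a <-> - a < x < a.
Proof. unfold Rabs; destruct Rcase_abs; split; intros; lra. Qed.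

#[export] Instance face_eq_Equivalence : Equivalence face_eq.
Proof. split; [intro; apply fe_refl | intros a b; apply fe_sym | intros a b c; apply fe_trans]. Qed.
#[export] Instance fmeet_Proper : Proper (face_eq ==> face_eq ==> face_eq) fmeet.
Proof. intros a a' Ha b b' Hb; apply fe_meet; auto. Qed.
#[export] Instance fjoin_Proper : Proper (face_eq ==> face_eq ==> face_eq) fjoin.
Proof. intros a a' Ha b b' Hb; apply fe_join; auto. Qed.

#[export] Instance dM_eq_Equivalence : Equivalence dM_eq.
Proof. split; [intro; apply dMe_refl | intros a b; apply dMe_sym | intros a b c; apply dMe_trans]. Qed.
#[export] Instance dmeet_Proper : Proper (dM_eq ==> dM_eq ==> dM_eq) dmeet.
Proof. intros a a' Ha b b' Hb; apply dMe_meet; auto. Qed.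
#[export] Instance djoin_Proper : Proper (dM_eq ==> dM_eq ==> dM_eq) djoin.
Proof. intros a a' Ha b b' Hb; apply dMe_join; auto. Qed.
#[export] Instance dneg_Proper : Proper (dM_eq ==> dM_eq) dneg.
Proof. intros a a' Ha; apply dMe_neg; auto. Qed.

Lemma fe_meet_top_l a : face_eq (fmeet ftop a) a.
Proof. rewrite fe_meetC. apply fe_meet1. Qed.
Lemma fe_join_bot_l a : face_eq (fjoin fbot a) a.
Proof. rewrite fe_joinC. apply fe_join0. Qed.
Lemma fe_join_top_l a : face_eq (fjoin ftop a) ftop.
Proof. rewrite <- (fe_meet_top_l a) at 1. apply fe_absJ. Qed.
Lemma fe_join_top_r a : face_eq (fjoin a ftop) ftop.
Proof. rewrite fe_joinC. apply fe_join_top_l. Qed.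
Lemma fe_meet_bot_l a : face_eq (fmeet fbot a) fbot.
Proof. rewrite <- (fe_join_bot_l a) at 1. apply fe_absM. Qed.
Lemma fe_meet_bot_r a : face_eq (fmeet a fbot) fbot.
Proof. rewrite fe_meetC. apply fe_meet_bot_l. Qed.

Lemma dMe_meet1_l a : dM_eq (dmeet done a) a.
Proof. rewrite dMe_meetC. apply dMe_meet1. Qed.
Lemma dMe_join0_l a : dM_eq (djoin dzero a) a.
Proof. rewrite dMe_joinC. apply dMe_join0. Qed.
Lemma dMe_join1_l a : dM_eq (djoin done a) done.
Proof. rewrite <- (dMe_meet1_l a) at 1. apply dMe_absJ. Qed.
Lemma dMe_meet0_l a : dM_eq (dmeet dzero a) dzero.
Proof. rewrite <- (dMe_join0_l a) at 1. apply dMe_absM. Qed.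
Lemma dMe_neg1 : dM_eq (dneg done) dzero.
Proof. rewrite <- dMe_neg0. apply dMe_negK. Qed.

Lemma tf_subst s b t : tf b (subst s t) = face_subst s (tf b t).
Proof.
  revert b; induction t; intros b; destruct b; simpl;
    try rewrite IHt1, IHt2; try rewrite IHt; auto.
Qed.

Lemma face_subst_subst s s' p :
  face_subst s' (face_subst s p) = face_subst (fun k => subst s' (s k)) p.
Proof. induction p; simpl; try rewrite IHp1, IHp2; auto; rewrite tf_subst; auto. Qed.

Lemma face_subst_comp {I J K} (f : hom J I) (g : hom K J) p :
  face_subst (hom_comp f g) p = face_subst g (face_subst f p).
Proof. rewrite face_subst_subst. reflexivity. Qed.

Lemma face_subst_ext (K : cobj) s s' p : face_in K p ->
  (forall k, mem K k = true -> s k = s' k) -> face_subst s p = face_subst s' p.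
Proof. induction p; simpl; intros Hin H; try (f_equal; tauto); rewrite H; auto. Qed.

Lemma face_subst_var p : face_subst dvar p = p.
Proof. induction p; simpl; congruence. Qed.

Lemma face_in_mono (I K : cobj) p : (forall n, mem I n = true -> mem K n = true) ->
  face_in I p -> face_in K p.
Proof. induction p; simpl; intuition. Qed.

Lemma tf_disjoint t : face_eq (fmeet (tf false t) (tf true t)) fbot.
Proof.
  induction t; simpl.
  - apply fe_01.
  - apply fe_meet_top_l.
  - apply fe_meet_bot_l.
  - rewrite fe_meetC, fe_distr.
    rewrite (fe_meetC (fmeet _ _) (tf false t1)), fe_meetA, IHt1, fe_meet_bot_l.
    rewrite (fe_meetC (tf true t1) (tf true t2)).
    rewrite (fe_meetC (fmeet _ _) (tf false t2)), fe_meetA, IHt2, fe_meet_bot_l.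
    apply fe_join0.
  - rewrite fe_distr.
    rewrite (fe_meetC (tf false t1) (tf false t2)), <- fe_meetA, IHt1, fe_meet_bot_r.
    rewrite (fe_meetC (tf false t2) (tf false t1)), <- fe_meetA, IHt2, fe_meet_bot_r.
    apply fe_join0.
  - rewrite fe_meetC; exact IHt.
Qed.

Lemma face_subst_cong s p q : face_eq p q -> face_eq (face_subst s p) (face_subst s q).
Proof.
  induction 1; simpl; try (constructor; auto; fail); try (econstructor; eauto; fail).
  apply tf_disjoint.
Qed.

Lemma face_top_comp {I J K : cobj} (f : hom J I) (g : hom K J) p :
  face_eq (face_subst f p) ftop -> face_eq (face_subst (hom_comp f g) p) ftop.
Proof. intros h. rewrite face_subst_comp. exact (face_subst_cong g _ _ h). Qed.

Definition unit_valued (rho : nat -> R) : Prop := forall n, 0 <= rho n <= 1.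

Fixpoint sat (p : face) (rho : nat -> R) : Prop :=
  match p with
  | fbot => False
  | ftop => True
  | feq0 k => rho k = 0
  | feq1 k => rho k = 1
  | fmeet a b => sat a rho /\ sat b rho
  | fjoin a b => sat a rho \/ sat b rho
  end.

Lemma sat_face_eq p q rho : face_eq p q -> (sat p rho <-> sat q rho).
Proof. induction 1; simpl; try tauto. split; [intros [H1 H2]; lra | tauto]. Qed.

Lemma sat_tf rho t : unit_valued rho ->
  (sat (tf true t) rho <-> ev rho t = 1) /\ (sat (tf false t) rho <-> ev rho t = 0).
Proof.
  intros Hb. induction t; simpl.
  - tauto.
  - split; split; intros; try lra; tauto.
  - split; split; intros; try lra; tauto.
  - pose proof (ev_bound rho t1 Hb). pose proof (ev_bound rho t2 Hb).
    destruct IHt1 as [A1 B1], IHt2 as [A2 B2]. rewrite A1, A2, B1, B2.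
    split; split; intros; solve_minmax.
  - pose proof (ev_bound rho t1 Hb). pose proof (ev_bound rho t2 Hb).
    destruct IHt1 as [A1 B1], IHt2 as [A2 B2]. rewrite A1, A2, B1, B2.
    split; split; intros; solve_minmax.
  - destruct IHt as [A B]. simpl. rewrite A, B. split; split; intros; lra.
Qed.

Lemma sat_subst s p rho : unit_valued rho ->
  (sat (face_subst s p) rho <-> sat p (fun k => ev rho (s k))).
Proof.
  intros Hb. induction p; simpl; try tauto; apply (sat_tf rho (s k) Hb).
Qed.

Lemma sat_ext (K : cobj) p rho rho' : face_in K p ->
  (forall k, mem K k = true -> rho k = rho' k) -> (sat p rho <-> sat p rho').
Proof. intros Hin H. induction p; simpl in *; try tauto; rewrite H; tauto. Qed.

Lemma sat_endpoints_mono (K : cobj) p rho rho' : face_in K p ->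
  (forall k, mem K k = true -> (rho k = 1 -> rho' k = 1) /\ (rho k = 0 -> rho' k = 0)) ->
  sat p rho -> sat p rho'.
Proof. intros Hin H. induction p; simpl in *; try tauto; intros; apply H; auto. Qed.

Lemma face_top_of_sat (K : cobj) p rho (s : nat -> dM) : face_in K p -> sat p rho ->
  (forall k, mem K k = true -> rho k = 1 -> s k = done) ->
  (forall k, mem K k = true -> rho k = 0 -> s k = dzero) ->
  face_eq (face_subst s p) ftop.
Proof.
  intros Hin Hs H1 H0. induction p; simpl in *.
  - tauto.
  - reflexivity.
  - rewrite H0; auto. reflexivity.
  - rewrite H1; auto. reflexivity.
  - destruct Hin, Hs. rewrite IHp1, IHp2 by auto. apply fe_meet1.
  - destruct Hin as [Hin1 Hin2]. destruct Hs.
    + rewrite IHp1 by auto. apply fe_join_top_l.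
    + rewrite IHp2 by auto. apply fe_join_top_r.
Qed.

(** * Sharpening *)

(* [sharpen d] is the affine map of slope [1 + 2 d] fixing [1/2], clamped to [0,1]; it commutes
   with min, max and [1 - x], i.e. it is an endomorphism of the de Morgan algebra [0,1]. *)
Definition sharpen (d s : R) : R := Rmax 0 (Rmin (s + d * (2 * s - 1)) 1).

Lemma sharpen_bound d s : 0 <= sharpen d s <= 1.
Proof. unfold sharpen; solve_minmax. Qed.

Lemma sharpen_mono d a b : 0 <= d -> a <= b -> sharpen d a <= sharpen d b.
Proof.
  intros Hd Hab. unfold sharpen.
  assert (a + d * (2 * a - 1) <= b + d * (2 * b - 1)) by nra. solve_minmax.
Qed.

Lemma sharpen_min d a b : 0 <= d -> sharpen d (Rmin a b) = Rmin (sharpen d a) (sharpen d b).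
Proof.
  intros Hd. destruct (Rle_dec a b) as [h|h].
  - pose proof (sharpen_mono d a b Hd h). rewrite Rmin_left by lra. solve_minmax.
  - assert (b <= a) by lra. pose proof (sharpen_mono d b a Hd H).
    rewrite Rmin_right by lra. solve_minmax.
Qed.

Lemma sharpen_max d a b : 0 <= d -> sharpen d (Rmax a b) = Rmax (sharpen d a) (sharpen d b).
Proof.
  intros Hd. destruct (Rle_dec a b) as [h|h].
  - pose proof (sharpen_mono d a b Hd h). rewrite Rmax_right by lra. solve_minmax.
  - assert (b <= a) by lra. pose proof (sharpen_mono d b a Hd H).
    rewrite Rmax_left by lra. solve_minmax.
Qed.

Lemma sharpen_neg d s : sharpen d (1 - s) = 1 - sharpen d s.
Proof.
  unfold sharpen.
  replace (1 - s + d * (2 * (1 - s) - 1)) with (1 - (s + d * (2 * s - 1))) by ring.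
  generalize (s + d * (2 * s - 1)); intros; solve_minmax.
Qed.

Lemma ev_sharpen d rho t : 0 <= d -> ev (fun n => sharpen d (rho n)) t = sharpen d (ev rho t).
Proof.
  intros Hd. induction t; simpl; try rewrite IHt1, IHt2; try rewrite IHt.
  - reflexivity.
  - unfold sharpen; solve_minmax.
  - unfold sharpen; solve_minmax.
  - rewrite sharpen_min; auto.
  - rewrite sharpen_max; auto.
  - rewrite sharpen_neg; auto.
Qed.

Lemma sharpen_0 s : 0 <= s <= 1 -> sharpen 0 s = s.
Proof. intros; unfold sharpen. replace (s + 0 * (2 * s - 1)) with s by ring. solve_minmax. Qed.

Lemma sharpen_lip d d' s s' e e' :
  0 <= d <= 1/2 -> 0 <= d' <= 1/2 -> 0 <= s <= 1 -> 0 <= s' <= 1 ->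
  Rabs (s - s') <= e -> Rabs (d - d') <= e' -> Rabs (sharpen d s - sharpen d' s') <= 2 * e + e'.
Proof.
  intros Hd Hd' Hs Hs' H1 H2. apply Rabs_le_inv in H1. apply Rabs_le_inv in H2.
  assert (Hx : - (2 * e + e') <= (s + d * (2 * s - 1)) - (s' + d' * (2 * s' - 1)) <= 2 * e + e').
  { replace ((s + d * (2 * s - 1)) - (s' + d' * (2 * s' - 1))) with
      ((s - s') * (1 + 2 * d) + (d - d') * (2 * s' - 1)) by ring.
    split; nra. }
  apply Rabs_le. unfold sharpen. revert Hx.
  generalize (s + d * (2 * s - 1)) (s' + d' * (2 * s' - 1)). intros. solve_minmax.
Qed.

(** * The level of a face *)

(* [level p] measures continuously how nearly [p] holds: when it is close to 1, [p] holds after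
   sharpening ([sat_sharpen_of_level]). *)
Definition ramp (s : R) : R := Rmax 0 (2 * s - 1).

Fixpoint level (p : face) (rho : nat -> R) : R :=
  match p with
  | fbot => 0
  | ftop => 1
  | feq0 k => ramp (1 - rho k)
  | feq1 k => ramp (rho k)
  | fmeet a b => Rmin (level a rho) (level b rho)
  | fjoin a b => Rmax (level a rho) (level b rho)
  end.

Lemma level_bound p rho : unit_valued rho -> 0 <= level p rho <= 1.
Proof.
  intros Hb. induction p; simpl; try lra; try (specialize (Hb k); unfold ramp);
    solve_minmax.
Qed.

Lemma level_face_eq p q rho : unit_valued rho -> face_eq p q -> level p rho = level q rho.
Proof.
  intros Hb H. induction H; simpl; try congruence;
  repeat match goal with |- context [level ?a rho] =>
    let h := fresh in pose proof (level_bound a rho Hb) as h; revert h;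
    generalize (level a rho) end;
  intros; try solve_minmax.
  specialize (Hb k). unfold ramp. solve_minmax.
Qed.

Lemma level_tf rho t b : level (tf b t) rho = ramp (if b then ev rho t else 1 - ev rho t).
Proof.
  revert b; induction t; intros b; destruct b; simpl;
    try rewrite IHt1, IHt2; try rewrite IHt; unfold ramp; simpl; try solve_minmax.
  all: f_equal; ring.
Qed.

Lemma level_subst s p rho : level (face_subst s p) rho = level p (fun k => ev rho (s k)).
Proof. induction p; simpl; try rewrite IHp1, IHp2; auto; rewrite level_tf; auto. Qed.

Lemma level_ext (K : cobj) p rho rho' : face_in K p ->
  (forall k, mem K k = true -> rho k = rho' k) -> level p rho = level p rho'.
Proof. intros Hin H. induction p; simpl in *; try rewrite H; intuition congruence. Qed.

Lemma level_lip p rho rho' e : (forall n, Rabs (rho n - rho' n) <= e) ->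
  Rabs (level p rho - level p rho') <= 2 * e.
Proof.
  intros H.
  assert (He : 0 <= e) by (pose proof (Rabs_pos (rho 0%nat - rho' 0%nat)); specialize (H 0%nat); lra).
  induction p; simpl; apply Rabs_le;
    try (specialize (H k); apply Rabs_le_inv in H; unfold ramp);
    try (apply Rabs_le_inv in IHp1; apply Rabs_le_inv in IHp2); solve_minmax.
Qed.

Lemma sat_sharpen_of_level p rho d : 0 <= d <= 1/2 -> 1 - d <= level p rho ->
  sat p (fun k => sharpen d (rho k)).
Proof.
  intros Hd. unfold sharpen. induction p; simpl; unfold ramp; intros H.
  - lra.
  - auto.
  - assert (rho k <= d/2) by solve_minmax.
    assert (rho k + d * (2 * rho k - 1) <= 0) by nra. solve_minmax.
  - assert (rho k >= 1 - d/2) by solve_minmax.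
    assert (rho k + d * (2 * rho k - 1) >= 1) by nra. solve_minmax.
  - split; [apply IHp1 | apply IHp2]; solve_minmax.
  - unfold Rmax at 1 in H. destruct Rle_dec; [right; apply IHp2 | left; apply IHp1]; lra.
Qed.
Lemma ev_subst rho s t : ev rho (subst s t) = ev (fun n => ev rho (s n)) t.
Proof. induction t; simpl; congruence. Qed.

Lemma ev_ext (K : cobj) rho rho' t : dM_in K t ->
  (forall k, mem K k = true -> rho k = rho' k) -> ev rho t = ev rho' t.
Proof.
  intros Hin H. induction t; simpl in *; try destruct Hin; f_equal; auto.
Qed.

Definition endpoint (rho : nat -> R) (k : nat) : option bool :=
  if Req_EM_T (rho k) 1 then Some true else if Req_EM_T (rho k) 0 then Some false else None.

Lemma endpoint_spec rho k :
  match endpoint rho k with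
  | Some true => rho k = 1 | Some false => rho k = 0 | None => rho k <> 1 /\ rho k <> 0
  end.
Proof. unfold endpoint; repeat destruct Req_EM_T; auto. Qed.

Lemma endpoint_1 rho k : rho k = 1 -> endpoint rho k = Some true.
Proof. intros H; unfold endpoint; destruct Req_EM_T; [auto | contradiction]. Qed.

Lemma endpoint_0 rho k : rho k = 0 -> endpoint rho k = Some false.
Proof.
  intros H; unfold endpoint; destruct Req_EM_T; [lra |].
  destruct Req_EM_T; [auto | contradiction].
Qed.

Definition collapse_map (c : nat -> option bool) (k : nat) : dM :=
  match c k with Some true => done | Some false => dzero | None => dvar k end.

Lemma collapse_map_in (K : cobj) c : forall k, mem K k = true -> dM_in K (collapse_map c k).
Proof. intros k Hk. unfold collapse_map. destruct (c k) as [[|]|]; simpl; auto. Qed.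

Definition collapse (K : cobj) c : hom K K := mkHom (collapse_map c) (collapse_map_in K c).

Lemma ev_collapse_endpoint rho k : ev rho (collapse_map (endpoint rho) k) = rho k.
Proof.
  unfold collapse_map. pose proof (endpoint_spec rho k).
  destruct (endpoint rho k) as [[|]|]; simpl; auto.
Qed.

Lemma subst_collapse_endpoint rho t : unit_valued rho ->
  (ev rho t = 1 -> dM_eq (subst (collapse_map (endpoint rho)) t) done) /\
  (ev rho t = 0 -> dM_eq (subst (collapse_map (endpoint rho)) t) dzero).
Proof.
  intros Hb. induction t; simpl.
  - unfold collapse_map. pose proof (endpoint_spec rho n).
    destruct (endpoint rho n) as [[|]|]; split; intros; try reflexivity; lra.
  - split; intros; [lra | reflexivity].
  - split; intros; [reflexivity | lra].
  - pose proof (ev_bound rho t1 Hb). pose proof (ev_bound rho t2 Hb).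
    destruct IHt1 as [A1 B1], IHt2 as [A2 B2]. split; intros Hev.
    + rewrite A1, A2 by solve_minmax. apply dMe_meet1.
    + unfold Rmin in Hev; destruct Rle_dec.
      * rewrite B1 by lra. apply dMe_meet0_l.
      * rewrite B2 by lra. rewrite dMe_meetC. apply dMe_meet0_l.
  - pose proof (ev_bound rho t1 Hb). pose proof (ev_bound rho t2 Hb).
    destruct IHt1 as [A1 B1], IHt2 as [A2 B2]. split; intros Hev.
    + unfold Rmax in Hev; destruct Rle_dec.
      * rewrite A2 by lra. rewrite dMe_joinC. apply dMe_join1_l.
      * rewrite A1 by lra. apply dMe_join1_l.
    + rewrite B1, B2 by solve_minmax. apply dMe_join0.
  - destruct IHt as [A B]. split; intros Hev.
    + rewrite B by lra. apply dMe_neg0.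
    + rewrite A by lra. apply dMe_neg1.
Qed.

Definition cube_pt (K : cobj) (F : nat -> R) (HF : unit_valued F) : cube K :=
  exist (fun w : {k : nat | mem K k = true} -> R => forall k, 0 <= w k <= 1)
        (fun k => F (proj1_sig k)) (fun k => HF (proj1_sig k)).

Lemma extv_in {K : cobj} (w : cube K) n (h : mem K n = true) :
  extv w n = proj1_sig w (exist _ n h).
Proof.
  unfold extv. destruct (sb (mem K n)) as [h'|h'].
  - do 2 f_equal. apply proof_irrelevance.
  - congruence.
Qed.

Lemma extv_out {K : cobj} (w : cube K) n : mem K n = false -> extv w n = 0.
Proof. intros h. unfold extv. destruct (sb (mem K n)); congruence. Qed.

Lemma extv_cube_pt K F HF n : mem K n = true -> extv (cube_pt K F HF) n = F n.
Proof. intros h. rewrite (extv_in _ n h). reflexivity. Qed.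

Lemma extv_cube_map {J I : cobj} (f : hom J I) (u : cube J) k :
  mem I k = true -> extv (cube_map f u) k = ev (extv u) (f k).
Proof. intros h. rewrite (extv_in _ k h). reflexivity. Qed.

Lemma cube_eq {K : cobj} (p q : cube K) :
  (forall n, mem K n = true -> extv p n = extv q n) -> p = q.
Proof.
  intros H. destruct p as [fp Hp], q as [fq Hq].
  assert (fp = fq).
  { apply functional_extensionality. intros [n hn].
    specialize (H n hn). rewrite !(extv_in _ n hn) in H. exact H. }
  subst fq. f_equal. apply proof_irrelevance.
Qed.

Lemma cube_map_comp {I J K : cobj} (f : hom J I) (g : hom K J) (u : cube K) :
  cube_map (hom_comp f g) u = cube_map f (cube_map g u).
Proof.
  apply cube_eq. intros n hn. rewrite !extv_cube_map by auto. simpl.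
  rewrite ev_subst. apply (ev_ext J). apply hwf; auto.
  intros k hk. rewrite extv_cube_map; auto.
Qed.

Lemma cube_map_collapse_endpoint {K : cobj} (w : cube K) :
  cube_map (collapse K (endpoint (extv w))) w = w.
Proof.
  apply cube_eq. intros n hn. rewrite extv_cube_map by auto. apply ev_collapse_endpoint.
Qed.

Lemma sing_eq (X : Top) (I : cobj) (a b : sing_ob X I) :
  (forall x, proj1_sig a x = proj1_sig b x) -> a = b.
Proof.
  intros H. destruct a as [fa Ha], b as [fb Hb]. simpl in H.
  assert (fa = fb) by (apply functional_extensionality; auto).
  subst. f_equal. apply proof_irrelevance.
Qed.

Lemma mem_add (I : cobj) i k : mem (add I i) k = (mem I k || Nat.eqb k i).
Proof. reflexivity. Qed.

Lemma mem_add_l (I : cobj) i k : mem I k = true -> mem (add I i) k = true.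
Proof. intros h. rewrite mem_add, h. reflexivity. Qed.

Lemma mem_add_r (I : cobj) i : mem (add I i) i = true.
Proof. rewrite mem_add, Nat.eqb_refl, orb_true_r. reflexivity. Qed.

Lemma mem_add_neq (I : cobj) i k : mem (add I i) k = true -> k <> i -> mem I k = true.
Proof.
  rewrite mem_add. intros h hki. apply Nat.eqb_neq in hki. rewrite hki, orb_false_r in h. exact h.
Qed.

Lemma mem_bounded (L : cobj) : exists N, forall n, mem L n = true -> (n < N)%nat.
Proof.
  destruct (proj2_sig L) as [N HN]. exists N. intros n hn.
  destruct (Nat.lt_ge_cases n N); auto. unfold mem in hn. rewrite HN in hn; auto. discriminate.
Qed.

Definition degen (I : cobj) (i : nat) : hom (add I i) I :=
  mkHom (fun k => dvar k) (fun k h => mem_add_l I i k h).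

Definition near {L : cobj} (x0 : cube L) (P : cube L -> Prop) : Prop :=
  exists e, 0 < e /\ forall x : cube L,
    (forall k, Rabs (proj1_sig x k - proj1_sig x0 k) < e) -> P x.

Lemma near_mono {L : cobj} (x0 : cube L) (P Q : cube L -> Prop) :
  (forall x, P x -> Q x) -> near x0 P -> near x0 Q.
Proof. intros H [e [He H1]]. exists e; split; auto. Qed.

Lemma near_always {L : cobj} (x0 : cube L) (P : cube L -> Prop) : (forall x, P x) -> near x0 P.
Proof. intros H. exists 1; split; auto; lra. Qed.

Lemma near_and {L : cobj} (x0 : cube L) (P Q : cube L -> Prop) :
  near x0 P -> near x0 Q -> near x0 (fun x => P x /\ Q x).
Proof.
  intros [e1 [He1 H1]] [e2 [He2 H2]]. exists (Rmin e1 e2). split.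
  - solve_minmax.
  - intros x Hx. split; [apply H1 | apply H2]; intros k; specialize (Hx k); solve_minmax.
Qed.

Lemma near_all_in {L : cobj} {A : Type} (x0 : cube L) (l : list A) (P : A -> cube L -> Prop) :
  (forall a, In a l -> near x0 (P a)) -> near x0 (fun x => forall a, In a l -> P a x).
Proof.
  induction l as [|b l IH]; intros H.
  - apply near_always. intros x a [].
  - apply (near_mono x0 (fun x => P b x /\ (forall a, In a l -> P a x))).
    + intros x [H1 H2] a [->|Ha]; auto.
    + apply near_and; [apply H; simpl; auto |].
      apply IH. intros a Ha; apply H; simpl; auto.
Qed.

Lemma near_cont (Y : Top) {L : cobj} (g : cube L -> Y) (x0 : cube L) V :
  cont Y L g -> topen Y V -> V (g x0) -> near x0 (fun x => V (g x)).
Proof. intros Hg HV Hx. exact (Hg V HV x0 Hx). Qed.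

Lemma extv_dist {L : cobj} (x x0 : cube L) e : 0 < e ->
  (forall k, Rabs (proj1_sig x k - proj1_sig x0 k) < e) ->
  forall n, Rabs (extv x n - extv x0 n) <= e.
Proof.
  intros He H n. destruct (sb (mem L n)) as [h|h].
  - rewrite !(extv_in _ n h). left; apply H.
  - rewrite !extv_out by auto. rewrite Rminus_0_r, Rabs_R0. lra.
Qed.

Definition endpoints_within {L : cobj} (w w0 : cube L) : Prop :=
  forall n, mem L n = true ->
    (extv w n = 1 -> extv w0 n = 1) /\ (extv w n = 0 -> extv w0 n = 0).

Lemma near_endpoints_within {L : cobj} (w0 : cube L) : near w0 (fun w => endpoints_within w w0).
Proof.
  destruct (mem_bounded L) as [N HN].
  apply (near_mono w0 (fun w => forall n, In n (seq 0 N) -> mem L n = true ->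
    (extv w n = 1 -> extv w0 n = 1) /\ (extv w n = 0 -> extv w0 n = 0))).
  { intros w H n hn. apply H; auto. apply in_seq. specialize (HN n hn). lia. }
  apply near_all_in. intros n _.
  destruct (sb (mem L n)) as [h|h]; [| apply near_always; intros; congruence].
  pose proof (extv_bound w0 n) as Hc.
  (* a coordinate strictly inside (0,1) stays inside on a small enough ball *)
  assert (He : exists e, 0 < e /\
    (extv w0 n = 0 \/ extv w0 n = 1 \/ (e <= extv w0 n /\ e <= 1 - extv w0 n))).
  { destruct (Req_EM_T (extv w0 n) 0); [exists (1/2); lra |].
    destruct (Req_EM_T (extv w0 n) 1); [exists (1/2); lra |].
    exists (Rmin (extv w0 n) (1 - extv w0 n)). solve_minmax. }
  destruct He as [e [He Hcase]]. exists (Rmin e (1/2)). split; [solve_minmax |].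
  intros w Hw _. specialize (Hw (exist _ n h)).
  rewrite <- (extv_in w n h), <- (extv_in w0 n h), Rabs_lt_iff in Hw.
  split; intros; solve_minmax.
Qed.

Fixpoint sublists {A : Type} (l : list A) : list (list A) :=
  match l with
  | nil => nil :: nil
  | a :: l' => map (cons a) (sublists l') ++ sublists l'
  end.

Lemma filter_in_sublists {A : Type} (f : A -> bool) l : In (filter f l) (sublists l).
Proof.
  induction l as [|a l IH]; simpl; auto.
  destruct (f a); apply in_or_app; [left; apply in_map; auto | right; auto].
Qed.

Lemma existsb_eqb_In k l : existsb (Nat.eqb k) l = true <-> In k l.
Proof.
  rewrite existsb_exists. split.
  - intros [y [Hy E]]. apply Nat.eqb_eq in E. subst; auto.
  - intros H. exists k; split; auto. apply Nat.eqb_refl.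
Qed.

(** * Filling an open box in a singular cube *)

Section Filling.
Variable X : Top.
Variable I : cobj.
Variable i : nat.
Variable phi : face.
Variable u : Defs.family (Sing X) I i phi.
Variable a0 : sing_ob X I.
Hypothesis i_fresh : mem I i = false.
Hypothesis phi_in : face_in I phi.
Hypothesis u_ok : family_ok (Sing X) I i phi u.
Hypothesis a0_ok : base_ok (Sing X) I i phi u a0.

Local Notation K := (add I i).

Definition glue (w : cube K) : X :=
  match excluded_middle_informative
          (face_eq (face_subst (collapse K (endpoint (extv w))) phi) ftop) with
  | left h => proj1_sig (u K (collapse K (endpoint (extv w))) h : sing_ob X K) w
  | right _ => proj1_sig a0 (cube_map (degen I i) w)
  end.

Lemma phi_in_K : face_in K phi.
Proof. exact (face_in_mono I K phi (mem_add_l I i) phi_in). Qed.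

Lemma family_res J J' (f : hom J K) (g : hom J' J) h h' q :
  proj1_sig (u J f h : sing_ob X J) (cube_map g q) =
  proj1_sig (u J' (hom_comp f g) h' : sing_ob X J') q.
Proof.
  change (proj1_sig (sing_res X J J' g (u J f h)) q =
          proj1_sig (u J' (hom_comp f g) h' : sing_ob X J') q).
  pose proof (proj2 u_ok J J' f g h h') as E. simpl in E. rewrite E. reflexivity.
Qed.

Lemma family_heq J (f g : hom J K) h h' q : heq f g ->
  proj1_sig (u J f h : sing_ob X J) q = proj1_sig (u J g h' : sing_ob X J) q.
Proof. intros He. rewrite (proj1 u_ok J f g h h' He). reflexivity. Qed.

Lemma sat_of_face_top J (G : hom J K) (h : face_eq (face_subst G phi) ftop) q :
  sat phi (extv (cube_map G q)).
Proof.
  assert (Hs : sat (face_subst G phi) (extv q)) by (apply (sat_face_eq _ _ _ h); exact Logic.I).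
  apply (sat_subst G phi (extv q) (extv_bound q)) in Hs.
  refine (proj1 (sat_ext K phi _ _ phi_in_K _) Hs).
  intros k hk. rewrite extv_cube_map; auto.
Qed.

Lemma face_top_of_sat_collapse (w : cube K) :
  sat phi (extv w) -> face_eq (face_subst (collapse K (endpoint (extv w))) phi) ftop.
Proof.
  intros Hs. apply (face_top_of_sat K phi (extv w)); auto using phi_in_K;
    intros k _ hk; simpl; unfold collapse_map.
  - rewrite endpoint_1; auto.
  - rewrite endpoint_0; auto.
Qed.

Lemma sat_of_face_top_collapse (w : cube K) :
  face_eq (face_subst (collapse K (endpoint (extv w))) phi) ftop -> sat phi (extv w).
Proof.
  intros h. pose proof (sat_of_face_top K _ h w) as Hs.
  rewrite cube_map_collapse_endpoint in Hs. exact Hs.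
Qed.

(* Both sides factor through the collapse of [q]; the two collapsed morphisms agree because
   [G] sends every coordinate of [K] at an endpoint of [G q] to a term deciding to that endpoint. *)
Lemma family_eq_glue J (G : hom J K) h q :
  proj1_sig (u J G h : sing_ob X J) q = glue (cube_map G q).
Proof.
  set (w := cube_map G q).
  assert (hw := face_top_of_sat_collapse w (sat_of_face_top J G h q)).
  unfold glue. destruct excluded_middle_informative as [h0|]; [| contradiction].
  set (F := collapse K (endpoint (extv w))) in *.
  set (Fq := collapse J (endpoint (extv q))).
  rewrite <- (cube_map_collapse_endpoint q) at 1.
  rewrite (family_res J J G Fq h (face_top_comp G Fq phi h)).
  rewrite (family_heq J (hom_comp G Fq) (hom_comp F (hom_comp G Fq)) _
             (face_top_comp F _ phi h0)).
  - rewrite <- (family_res K J F (hom_comp G Fq) h0).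
    rewrite cube_map_comp. unfold Fq. rewrite cube_map_collapse_endpoint. reflexivity.
  - intros k hk. simpl.
    change (collapse_map (endpoint (extv w)) k) with
      (match endpoint (extv w) k with Some true => done | Some false => dzero | None => dvar k end).
    pose proof (endpoint_spec (extv w) k) as Hp.
    assert (Hwk : extv w k = ev (extv q) (G k)) by (apply extv_cube_map; exact hk).
    rewrite Hwk in Hp.
    destruct (endpoint (extv w) k) as [[|]|]; simpl.
    + apply (proj1 (subst_collapse_endpoint (extv q) (G k) (extv_bound q))). exact Hp.
    + apply (proj2 (subst_collapse_endpoint (extv q) (G k) (extv_bound q))). exact Hp.
    + reflexivity.
Qed.

Lemma glue_unsat (w : cube K) :
  ~ sat phi (extv w) -> glue w = proj1_sig a0 (cube_map (degen I i) w).
Proof.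
  intros Hn. unfold glue. destruct excluded_middle_informative as [h|]; auto.
  exfalso. exact (Hn (sat_of_face_top_collapse w h)).
Qed.

Lemma glue_bottom (w : cube K) :
  sat phi (extv w) -> extv w i = 0 -> proj1_sig a0 (cube_map (degen I i) w) = glue w.
Proof.
  intros Hs Hw.
  set (y := cube_map (degen I i) w).
  assert (Hy : forall k, mem I k = true -> extv y k = extv w k).
  { intros k hk. unfold y. rewrite extv_cube_map; auto. }
  set (f := collapse I (endpoint (extv y))).
  assert (hf : face_eq (face_subst f phi) ftop).
  { apply (face_top_of_sat I phi (extv y)); auto.
    - exact (proj2 (sat_ext I phi _ _ phi_in Hy) Hs).
    - intros k _ hk; simpl; unfold collapse_map. rewrite endpoint_1; auto.
    - intros k _ hk; simpl; unfold collapse_map. rewrite endpoint_0; auto. }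
  set (fi := face_i I i false).
  assert (h' : face_eq (face_subst (hom_comp fi f) phi) ftop).
  { rewrite face_subst_comp, (face_subst_ext I fi dvar phi phi_in), face_subst_var; [exact hf |].
    intros k hk. simpl. destruct (Nat.eqb_spec k i); [subst; congruence | auto]. }
  transitivity (proj1_sig a0 (cube_map f y)).
  { unfold f. rewrite cube_map_collapse_endpoint. reflexivity. }
  change (proj1_sig (sing_res X I I f a0) y = glue w).
  pose proof (a0_ok I f hf h') as E. simpl in E.
  rewrite E, family_eq_glue, cube_map_comp.
  unfold f. rewrite cube_map_collapse_endpoint. f_equal.
  apply cube_eq. intros n hn. rewrite extv_cube_map by auto. simpl.
  destruct (Nat.eqb_spec n i) as [->|Hni]; [exact (eq_sym Hw) |].
  apply Hy. exact (mem_add_neq I i n hn Hni).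
Qed.

Definition collapse_on (z0 : cube K) (L : list nat) : hom K K :=
  collapse K (fun n => if existsb (Nat.eqb n) L then endpoint (extv z0) n else None).

Lemma cube_map_collapse_on (z0 w : cube K) L :
  (forall n, mem K n = true -> In n L -> endpoint (extv z0) n = endpoint (extv w) n) ->
  cube_map (collapse_on z0 L) w = w.
Proof.
  intros H. apply cube_eq. intros n hn. rewrite extv_cube_map by auto. simpl.
  unfold collapse_map. destruct (existsb (Nat.eqb n) L) eqn:E; [| reflexivity].
  apply existsb_eqb_In in E. rewrite H by auto. pose proof (endpoint_spec (extv w) n) as Hp.
  destruct (endpoint (extv w) n) as [[|]|]; simpl; auto.
Qed.

Lemma glue_finite_pieces (z0 : cube K) : exists Ls : list (list nat),
  forall w, endpoints_within w z0 -> sat phi (extv w) ->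
  exists L (h : face_eq (face_subst (collapse_on z0 L) phi) ftop),
    In L Ls /\ glue w = proj1_sig (u K (collapse_on z0 L) h : sing_ob X K) w.
Proof.
  destruct (mem_bounded K) as [N HN].
  set (is_end := fun rho n => match endpoint rho n with Some _ => true | None => false end).
  set (K0 := filter (is_end (extv z0)) (seq 0 N)).
  exists (sublists K0). intros w Hwz Hs.
  set (L := filter (is_end (extv w)) K0).
  assert (HL : forall n, mem K n = true -> endpoint (extv w) n <> None ->
                 In n L /\ endpoint (extv z0) n = endpoint (extv w) n).
  { intros n hn Hne. pose proof (endpoint_spec (extv w) n) as Hp.
    assert (Hz : endpoint (extv z0) n = endpoint (extv w) n).
    { destruct (endpoint (extv w) n) as [[|]|]; [| | congruence].
      - apply endpoint_1, (Hwz n hn), Hp.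
      - apply endpoint_0, (Hwz n hn), Hp. }
    split; [| exact Hz].
    unfold L, K0, is_end. rewrite !filter_In, in_seq, Hz.
    specialize (HN n hn). destruct (endpoint (extv w) n); [lia | congruence]. }
  assert (Hfix : forall n, mem K n = true -> In n L -> endpoint (extv z0) n = endpoint (extv w) n).
  { intros n hn HnL. unfold L, is_end in HnL. apply filter_In in HnL.
    destruct (endpoint (extv w) n) eqn:E; [| destruct HnL; discriminate].
    rewrite <- E. exact (proj2 (HL n hn ltac:(congruence))). }
  assert (hL : face_eq (face_subst (collapse_on z0 L) phi) ftop).
  { apply (face_top_of_sat K phi (extv w)); auto using phi_in_K; intros k hk Hk;
      simpl; unfold collapse_map.
    - assert (He : endpoint (extv w) k = Some true) by (apply endpoint_1; auto).
      destruct (HL k hk ltac:(congruence)) as [HkL Hz].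
      rewrite (proj2 (existsb_eqb_In k L) HkL), Hz, He; reflexivity.
    - assert (He : endpoint (extv w) k = Some false) by (apply endpoint_0; auto).
      destruct (HL k hk ltac:(congruence)) as [HkL Hz].
      rewrite (proj2 (existsb_eqb_In k L) HkL), Hz, He; reflexivity. }
  exists L, hL. split; [apply filter_in_sublists |].
  rewrite <- (cube_map_collapse_on z0 w L Hfix) at 1. symmetry. apply family_eq_glue.
Qed.

Lemma near_glue_sat (z0 : cube K) V : topen X V -> V (glue z0) ->
  near z0 (fun w => endpoints_within w z0 -> sat phi (extv w) -> V (glue w)).
Proof.
  intros HV Hz0. destruct (glue_finite_pieces z0) as [Ls HLs].
  assert (Hpieces : near z0 (fun w => forall L, In L Ls ->
     forall h : face_eq (face_subst (collapse_on z0 L) phi) ftop,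
       V (proj1_sig (u K (collapse_on z0 L) h : sing_ob X K) w))).
  { apply near_all_in. intros L _.
    destruct (classic (face_eq (face_subst (collapse_on z0 L) phi) ftop)) as [h0|nh];
      [| apply near_always; intros w h; contradiction].
    assert (Hv0 : V (proj1_sig (u K (collapse_on z0 L) h0 : sing_ob X K) z0)).
    { rewrite family_eq_glue, cube_map_collapse_on; auto. }
    eapply near_mono; [| exact (near_cont X _ z0 V (proj2_sig (u K _ h0)) HV Hv0)].
    intros w Hw h. rewrite (proof_irrelevance _ h h0). exact Hw. }
  eapply near_mono; [| exact Hpieces]. intros w Hw Hwz Hs.
  destruct (HLs w Hwz Hs) as [L [h [HL ->]]]. exact (Hw L HL h).
Qed.

Definition lvl (x : cube I) : R := level phi (extv x).
Definition sharpness (x : cube I) : R := Rmin (1 - lvl x) (1/2).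
Definition height (x : cube I) : R := Rmax 0 (Rmin (2 * lvl x - 1) 1).

Lemma lvl_bound x : 0 <= lvl x <= 1.
Proof. apply level_bound. exact (extv_bound x). Qed.

Lemma sharpness_bound x : 0 <= sharpness x <= 1/2.
Proof. pose proof (lvl_bound x). unfold sharpness. solve_minmax. Qed.

Definition lift_coord (x : cube I) (n : nat) : R :=
  if Nat.eqb n i then height x else sharpen (sharpness x) (extv x n).

Lemma lift_coord_unit x : unit_valued (lift_coord x).
Proof.
  intros n. unfold lift_coord. destruct Nat.eqb; [unfold height; solve_minmax | apply sharpen_bound].
Qed.

Definition lift (x : cube I) : cube K := cube_pt K (lift_coord x) (lift_coord_unit x).

Definition comp_fun (x : cube I) : X := glue (lift x).

Lemma extv_lift_i x : extv (lift x) i = height x.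
Proof. unfold lift. rewrite extv_cube_pt by apply mem_add_r. unfold lift_coord. now rewrite Nat.eqb_refl. Qed.

Lemma extv_lift_I x k : mem I k = true -> extv (lift x) k = sharpen (sharpness x) (extv x k).
Proof.
  intros hk. unfold lift. rewrite extv_cube_pt by (apply mem_add_l; exact hk). unfold lift_coord.
  destruct (Nat.eqb_spec k i); [subst; congruence | reflexivity].
Qed.

Lemma sat_lift x : 1/2 <= lvl x -> sat phi (extv (lift x)).
Proof.
  intros Hp. pose proof (sharpness_bound x) as Hd.
  assert (Ht := sat_sharpen_of_level phi (extv x) (sharpness x) Hd
                  ltac:(unfold sharpness, lvl in *; solve_minmax)).
  refine (proj1 (sat_ext I phi _ _ phi_in _) Ht).
  intros k hk. rewrite extv_lift_I; auto.
Qed.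

Lemma lift_lip (x x0 : cube I) e : 0 < e ->
  (forall k, Rabs (proj1_sig x k - proj1_sig x0 k) < e) ->
  forall k, Rabs (proj1_sig (lift x) k - proj1_sig (lift x0) k) <= 4 * e.
Proof.
  intros He H k.
  assert (Hp : Rabs (lvl x - lvl x0) <= 2 * e) by (apply level_lip, extv_dist; auto).
  pose proof (lvl_bound x). pose proof (lvl_bound x0). apply Rabs_le_inv in Hp.
  simpl. unfold lift_coord. destruct (Nat.eqb _ i).
  - apply Rabs_le. unfold height. solve_minmax.
  - replace (4 * e) with (2 * e + 2 * e) by ring.
    apply sharpen_lip; try apply sharpness_bound; try apply extv_bound.
    + apply Rabs_le, Rabs_le_inv, extv_dist; auto.
    + apply Rabs_le. unfold sharpness. solve_minmax.
Qed.

Lemma near_lift (x0 : cube I) (Q : cube K -> Prop) :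
  near (lift x0) Q -> near x0 (fun x => Q (lift x)).
Proof.
  intros [e [He H]]. exists (e / 5). split; [lra |]. intros x Hx. apply H. intros k.
  pose proof (lift_lip x x0 (e / 5) ltac:(lra) Hx k). lra.
Qed.

Lemma degen_cont : cont X K (fun w => proj1_sig a0 (cube_map (degen I i) w)).
Proof. apply cont_comp. exact (proj2_sig a0). Qed.

(* Where [phi] fails at the lift of [x], [lvl x < 1/2], so the lift lies on the bottom face, where
   [glue] is [a0]. *)
Lemma near_comp_fun_unsat (x0 : cube I) V : topen X V ->
  sat phi (extv (lift x0)) -> V (comp_fun x0) ->
  near x0 (fun x => ~ sat phi (extv (lift x)) -> V (comp_fun x)).
Proof.
  intros HV Hs0 Hx0. destruct (Rle_lt_dec (height x0) 0) as [Hh|Hh].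
  - assert (E : proj1_sig a0 (cube_map (degen I i) (lift x0)) = comp_fun x0).
    { apply glue_bottom; [exact Hs0 |]. rewrite extv_lift_i. unfold height in *. solve_minmax. }
    rewrite <- E in Hx0.
    eapply near_mono; [| exact (near_lift x0 _ (near_cont X _ _ V degen_cont HV Hx0))].
    intros x Hx Hn. unfold comp_fun. rewrite glue_unsat; auto.
  - assert (Hpos : near (lift x0) (fun w => extv w i > 0)).
    { exists (height x0). split; [exact Hh |]. intros w Hw.
      specialize (Hw (exist _ i (mem_add_r I i))).
      rewrite <- !(extv_in _ i (mem_add_r I i)), extv_lift_i, Rabs_lt_iff in Hw. lra. }
    eapply near_mono; [| exact (near_lift x0 _ Hpos)]. intros x Hx Hn. exfalso. apply Hn.
    cbv beta in Hx. rewrite extv_lift_i in Hx. apply sat_lift. unfold height in Hx. solve_minmax.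
Qed.

Lemma comp_fun_cont : cont X I comp_fun.
Proof.
  intros V HV x0 Hx0. change (near x0 (fun x => V (comp_fun x))).
  set (z0 := lift x0).
  pose proof (near_lift x0 _ (near_endpoints_within z0)) as Hwithin.
  destruct (classic (sat phi (extv z0))) as [S0|nS0].
  - pose proof (near_lift x0 _ (near_glue_sat z0 V HV Hx0)) as Hsat.
    pose proof (near_comp_fun_unsat x0 V HV S0 Hx0) as Hunsat.
    eapply near_mono; [| exact (near_and x0 _ _ (near_and x0 _ _ Hwithin Hsat) Hunsat)].
    intros x [[Hx1 Hx2] Hx3]. destruct (classic (sat phi (extv (lift x)))); auto.
  - unfold comp_fun in Hx0. rewrite glue_unsat in Hx0 by exact nS0.
    pose proof (near_lift x0 _ (near_cont X _ z0 V degen_cont HV Hx0)) as Hbase.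
    eapply near_mono; [| exact (near_and x0 _ _ Hwithin Hbase)].
    intros x [Hx1 Hx2]. unfold comp_fun. rewrite glue_unsat; [exact Hx2 |].
    intros Hs. exact (nS0 (sat_endpoints_mono K phi _ _ phi_in_K Hx1 Hs)).
Qed.

Lemma comp_fun_full (Htop : face_eq phi ftop)
  (h : face_eq (face_subst (face_i I i true) phi) ftop) x :
  comp_fun x = proj1_sig (u I (face_i I i true) h : sing_ob X I) x.
Proof.
  rewrite family_eq_glue. unfold comp_fun. f_equal.
  assert (Hp : lvl x = 1) by (unfold lvl; rewrite (level_face_eq _ _ _ (extv_bound x) Htop); auto).
  apply cube_eq. intros n hn. rewrite extv_cube_map by auto. simpl.
  destruct (Nat.eqb_spec n i) as [->|Hni].
  - rewrite extv_lift_i. simpl. unfold height. rewrite Hp. solve_minmax.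
  - rewrite extv_lift_I by exact (mem_add_neq I i n hn Hni).
    unfold sharpness. rewrite Hp, Rmin_left, Rminus_diag by lra. apply sharpen_0, extv_bound.
Qed.

End Filling.

Lemma lift_face_eq I i phi psi x : face_eq phi psi -> lift I i phi x = lift I i psi x.
Proof.
  intros Hpq.
  assert (Hl : lvl I phi x = lvl I psi x) by (apply level_face_eq; [exact (extv_bound x) | exact Hpq]).
  apply cube_eq. intros n hn. unfold lift. rewrite !extv_cube_pt by exact hn.
  unfold lift_coord, height, sharpness. rewrite Hl. reflexivity.
Qed.

Lemma glue_face_eq X I i phi psi (u : Defs.family (Sing X) I i phi)
    (v : Defs.family (Sing X) I i psi) a0 w :
  face_eq phi psi -> (forall J f h h', u J f h = v J f h') ->
  glue X I i phi u a0 w = glue X I i psi v a0 w.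
Proof.
  intros Hpq Huv. unfold glue.
  set (F := collapse (add I i) (endpoint (extv w))).
  destruct excluded_middle_informative as [h1|n1];
    destruct excluded_middle_informative as [h2|n2].
  - rewrite (Huv _ _ h1 h2). reflexivity.
  - exfalso. apply n2. rewrite <- (face_subst_cong F _ _ Hpq). exact h1.
  - exfalso. apply n1. rewrite (face_subst_cong F _ _ Hpq). exact h2.
  - reflexivity.
Qed.

Lemma hom_ext_dom {J I : cobj} (f : hom J I) i j k :
  mem I i = false -> mem I k = true -> hom_ext f i j k = f k.
Proof. intros Hi hk. simpl. destruct (Nat.eqb_spec k i); [subst; congruence | reflexivity]. Qed.

Lemma face_subst_hom_ext {J I : cobj} (f : hom J I) i j phi :
  mem I i = false -> face_in I phi -> face_subst (hom_ext f i j) phi = face_subst f phi.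
Proof. intros Hi Hin. apply (face_subst_ext I); auto using hom_ext_dom. Qed.

Lemma lift_natural I i phi J j (f : hom J I) x :
  mem I i = false -> mem J j = false -> face_in I phi ->
  lift I i phi (cube_map f x) = cube_map (hom_ext f i j) (lift J j (face_subst f phi) x).
Proof.
  intros Hi Hj Hin.
  assert (Hl : lvl I phi (cube_map f x) = lvl J (face_subst f phi) x).
  { unfold lvl. rewrite level_subst. apply (level_ext I); auto.
    intros k hk. rewrite extv_cube_map; auto. }
  apply cube_eq. intros n hn. rewrite extv_cube_map by exact hn.
  destruct (Nat.eqb_spec n i) as [->|Hni].
  - simpl. rewrite Nat.eqb_refl. simpl. rewrite !extv_lift_i. unfold height. rewrite Hl. reflexivity.
  - assert (hnI := mem_add_neq I i n hn Hni).
    rewrite hom_ext_dom, extv_lift_I by auto.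
    unfold sharpness. rewrite Hl, extv_cube_map by exact hnI.
    fold (sharpness J (face_subst f phi) x).
    rewrite (ev_ext J (extv (lift J j (face_subst f phi) x)) (fun m => sharpen (sharpness J (face_subst f phi) x) (extv x m)));
      [| apply hwf; exact hnI | intros m hm; apply extv_lift_I; auto].
    rewrite ev_sharpen; [reflexivity | apply sharpness_bound].
Qed.

Lemma glue_natural X I i phi (u : Defs.family (Sing X) I i phi) a0 J j (f : hom J I)
    (u' : Defs.family (Sing X) J j (face_subst f phi)) w :
  mem I i = false -> face_in I phi -> family_ok (Sing X) I i phi u ->
  face_in J (face_subst f phi) -> family_ok (Sing X) J j (face_subst f phi) u' ->
  (forall K g h h', u' K g h = u K (hom_comp (hom_ext f i j) g) h') ->
  glue X I i phi u a0 (cube_map (hom_ext f i j) w) =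
  glue X J j (face_subst f phi) u' (sing_res X I J f a0) w.
Proof.
  intros Hi Hin Hok HinJ HokJ Hu.
  set (E := hom_ext f i j).
  destruct (classic (sat (face_subst f phi) (extv w))) as [S|nS].
  - set (G := collapse (add J j) (endpoint (extv w))).
    assert (hG : face_eq (face_subst G (face_subst f phi)) ftop)
      by (apply face_top_of_sat_collapse; auto).
    assert (hEG : face_eq (face_subst (hom_comp E G) phi) ftop).
    { rewrite face_subst_comp. unfold E. rewrite face_subst_hom_ext by auto. exact hG. }
    rewrite <- (cube_map_collapse_endpoint w) at 2. fold G.
    rewrite <- (family_eq_glue X J j _ u' _ HinJ HokJ _ G hG), (Hu _ G hG hEG).
    rewrite (family_eq_glue X I i phi u a0 Hin Hok), cube_map_comp.
    unfold G. rewrite cube_map_collapse_endpoint. reflexivity.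
  - assert (nSE : ~ sat phi (extv (cube_map E w))).
    { rewrite <- (sat_ext I phi (fun k => ev (extv w) (f k))); auto.
      - rewrite <- sat_subst by exact (extv_bound w). exact nS.
      - intros k hk. rewrite extv_cube_map by (apply mem_add_l; exact hk).
        unfold E. rewrite hom_ext_dom; auto. }
    rewrite !glue_unsat by auto. simpl. f_equal.
    apply cube_eq. intros k hk. rewrite !extv_cube_map by auto. simpl.
    rewrite extv_cube_map by (apply mem_add_l; exact hk). unfold E. rewrite hom_ext_dom by auto.
    apply (ev_ext J); [apply hwf; exact hk |].
    intros m hm. rewrite extv_cube_map by exact hm. reflexivity.
Qed.

Definition sing_comp_op (X : Top) (I : cobj) (i : nat) (phi : face)
    (u : Defs.family (Sing X) I i phi) (a0 : sing_ob X I) : sing_ob X I :=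
  match excluded_middle_informative (valid (Sing X) I i phi u a0) with
  | left H =>
      let '(conj Hi (conj Hin (conj Hok Hbase))) := H in
      exist _ (comp_fun X I i phi u a0) (comp_fun_cont X I i phi u a0 Hi Hin Hok Hbase)
  | right _ => a0
  end.

Lemma sing_comp_op_valid X I i phi u a0 : valid (Sing X) I i phi u a0 ->
  forall x, proj1_sig (sing_comp_op X I i phi u a0) x = comp_fun X I i phi u a0 x.
Proof.
  intros Hv x. unfold sing_comp_op.
  destruct excluded_middle_informative as [[? [? [? ?]]]|]; [reflexivity | contradiction].
Qed.

Definition sing_comp (X : Top) : comp_structure (Sing X).
Proof.
  refine {| Defs.comp := sing_comp_op X |}.
  - intros I i phi psi u v a0 Hu Hv Hpq Huv. apply sing_eq. intros x.
    rewrite (sing_comp_op_valid X I i phi u a0 Hu), (sing_comp_op_valid X I i psi v a0 Hv).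
    unfold comp_fun. rewrite (lift_face_eq I i phi psi x Hpq). apply glue_face_eq; auto.
  - intros I i phi u a0 J j f u' HvI HvJ Hu. apply sing_eq. intros x. simpl.
    rewrite (sing_comp_op_valid X I i phi u a0 HvI), (sing_comp_op_valid X J j _ u' _ HvJ).
    destruct HvI as [Hi [Hin [Hok _]]], HvJ as [Hj [HinJ [HokJ _]]].
    unfold comp_fun. rewrite (lift_natural I i phi J j f x Hi Hj Hin).
    apply glue_natural; auto.
  - intros I i phi u a0 h Hv Htop. apply sing_eq. intros x.
    rewrite (sing_comp_op_valid X I i phi u a0 Hv).
    destruct Hv as [Hi [Hin [Hok _]]]. apply comp_fun_full; auto.
Defined.

Theorem corollaryC2 : forall X : Top, inhabited (comp_structure (Sing X)).
Proof. intros X. exact (inhabits (sing_comp X)). Qed.
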